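(* Let $P$ be a probability distribution on a set $\mathcal{X}$ and let $f,g:\mathcal{X}\to\mathbb{R}^d$ be square-integrable functions with respect to $P$. Then $$\mathbb{E}_{x,x'\sim P\ \text{i.i.d.}}\big[\|f(x)-g(x')\|_2^2\big]\ge\frac12\,\mathbb{E}_{x\sim P}\big[\|f(x)-g(x)\|_2^2\big].$$ *)

From HB Require Import structures.
From mathcomp Require Import all_boot all_order all_algebra.
From mathcomp Require Import all_classical all_reals all_analysis.
Set Implicit Arguments. Unset Strict Implicit. Unset Printing Implicit Defensive.
Import Order.TTheory GRing.Theory Num.Theory.
Import numFieldNormedType.Exports.
Local Open Scope classical_set_scope.
Local Open Scope ring_scope.

Definition sqnorm2 {R : realType} {d : nat} (u : 'rV[R]_d) : R :=
  \sum_(i < d) (u ord0 i) ^+ 2.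

Definition sq_integrable {dX : measure_display} {X : measurableType dX}
  {R : realType} {d : nat} (P : set X -> \bar R) (f : X -> 'rV[R]_d) : Prop :=
  (forall i : 'I_d, measurable_fun setT (fun x => f x ord0 i)) /\
  P.-integrable setT (fun x => (sqnorm2 (f x))%:E).

From HB Require Import structures.
From mathcomp Require Import all_boot all_order all_algebra.
From mathcomp Require Import all_classical all_reals all_analysis.
From mathcomp Require Import measurable_realfun lebesgue_integral_fubini lra.
Set Implicit Arguments. Unset Strict Implicit. Unset Printing Implicit Defensive.
Import Order.TTheory GRing.Theory Num.Theory.
Local Open Scope classical_set_scope.
Local Open Scope ring_scope.

(* Both sides split over coordinates, so it suffices to treat real u, v in
   L^2(P).  For independent x, x' one has
     E (u x - v x')^2 = Var u + Var v + (E u - E v)^2,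
   while E (u - v)^2 = Var (u - v) + (E u - E v)^2, and
   Var (u - v) <= 2 (Var u + Var v) because
   Var (u - v) + Var (u + v) = 2 (Var u + Var v). *)

Lemma sqr_integrable_Lfun2 d (T : measurableType d) (R : realType)
    (mu : {measure set T -> \bar R}) (f : T -> R) :
  measurable_fun setT f -> mu.-integrable setT (EFin \o (fun x => f x ^+ 2)) ->
  f \in Lfun mu 2%:E.
Proof.
move=> mf /integrableP[_ finf2]; rewrite inE; apply/andP; split; rewrite inE //=.
rewrite /finite_norm unlock; apply: poweR_lty; apply: le_lt_trans finf2.
by under eq_integral => x _ do rewrite /= powR_mulrn // -normrX.
Qed.

Section second_moments.
Context d (T : measurableType d) (R : realType) (P : probability T R).
Local Open Scope ereal_scope.

Lemma Lfun2B_cst (c : R) (X : T -> R) : X \in Lfun P 2%:E ->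
  (X \- cst c)%R \in Lfun P 2%:E.
Proof. by move=> X2; rewrite rpredB ?lee1n //= => _; rewrite Lfun_cst. Qed.

Lemma expectation_sqrB_cst (X : T -> R) (c : R) : X \in Lfun P 2%:E ->
  'E_P[((X \- cst c) ^+ 2)%R] = 'V_P[X] + ('E_P[X] - c%:E) ^+ 2.
Proof.
move=> X2.
have Xc2 := Lfun2B_cst c X2.
have L1 := Lfun_subset12 (fin_num_measure P _ measurableT).
rewrite -[in RHS](varianceB_cst_r c X2) varianceE // expectationB ?L1 ?Lfun_cst //.
rewrite expectation_cst subeK // fin_numX // fin_numB expectation_fin_num ?L1 //.
Qed.

Lemma varianceB_le (X Y : T -> R) : X \in Lfun P 2%:E -> Y \in Lfun P 2%:E ->
  'V_P[(X \- Y)%R] <= 2%:E * ('V_P[X] + 'V_P[Y]).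
Proof.
move=> X2 Y2.
have L1 := Lfun_subset12 (fin_num_measure P _ measurableT).
have := variance_ge0 P (X \+ Y)%R.
rewrite varianceD // varianceB //.
rewrite -(fineK (variance_fin_num X2)) -(fineK (variance_fin_num Y2)).
rewrite -(fineK (covariance_fin_num (L1 _ X2) (L1 _ Y2) (Lfun2_mul_Lfun1 X2 Y2))).
rewrite -!EFinD -!EFinM !lee_fin; lra.
Qed.

Lemma Lfun2_sqr_Lfun1 (X : T -> R) : X \in Lfun P 2%:E -> (X ^+ 2)%R \in Lfun P 1.
Proof. by move=> X2; rewrite exprfctE; apply/Lfun1_integrable/Lfun2_integrable_sqr. Qed.

Lemma iid_second_moment (X Y : T -> R) : X \in Lfun P 2%:E -> Y \in Lfun P 2%:E ->
  \int[P \x P]_z ((X z.1 - Y z.2) ^+ 2)%:E =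
  'V_P[X] + 'V_P[Y] + ('E_P[X] - 'E_P[Y]) ^+ 2.
Proof.
move=> X2 Y2.
have mX : measurable_fun setT X by move: (sub_Lfun_mfun X2); rewrite inE.
have mY : measurable_fun setT Y by move: (sub_Lfun_mfun Y2); rewrite inE.
rewrite fubini_tonelli1 /fubini_F; last 2 first.
- apply/measurable_EFinP; apply: measurable_funX; apply: measurable_funB.
  + exact: measurableT_comp mX measurable_fst.
  + exact: measurableT_comp mY measurable_snd.
- by move=> z; rewrite lee_fin sqr_ge0.
have inner x : \int[P]_y ((X x - Y y) ^+ 2)%:E = 'V_P[Y] + ('E_P[Y] - (X x)%:E) ^+ 2.
  rewrite -expectation_sqrB_cst // [in RHS]unlock.
  by apply: eq_integral => y _; rewrite /= -sqrrN opprB.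
under eq_integral => x _ do rewrite inner.
have L1 := Lfun_subset12 (fin_num_measure P _ measurableT).
have EYE := fineK (expectation_fin_num (L1 _ Y2)).
have VYE := fineK (variance_fin_num Y2).
rewrite -EYE -VYE; set m := fine 'E_P[Y]; set s := fine 'V_P[Y].
transitivity 'E_P[((X \- cst m) ^+ 2 \+ cst s)%R].
  rewrite unlock; apply: eq_integral => x _.
  by rewrite -EFinB -EFin_expe -EFinD addrC -sqrrN opprB.
rewrite expectationD ?Lfun2_sqr_Lfun1 ?Lfun_cst ?Lfun2B_cst //.
by rewrite expectation_sqrB_cst // expectation_cst addeAC.
Qed.

Lemma iid_sqr_dist_ge (X Y : T -> R) : X \in Lfun P 2%:E -> Y \in Lfun P 2%:E ->
  2^-1%:E * \int[P]_x ((X x - Y x) ^+ 2)%:E <=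
  \int[P \x P]_z ((X z.1 - Y z.2) ^+ 2)%:E.
Proof.
move=> X2 Y2.
have L1 := Lfun_subset12 (fin_num_measure P _ measurableT).
have XY2 : (X \- Y)%R \in Lfun P 2%:E by rewrite rpredB ?lee1n.
have := varianceB_le X2 Y2.
have -> : \int[P]_x ((X x - Y x) ^+ 2)%:E = 'E_P[(((X \- Y) \- cst 0) ^+ 2)%R].
  by rewrite unlock; apply: eq_integral => x _; rewrite exprfctE /= subr0.
rewrite iid_second_moment // expectation_sqrB_cst // expectationB ?L1 // sube0.
rewrite -(fineK (variance_fin_num XY2)) -(fineK (variance_fin_num X2)).
rewrite -(fineK (variance_fin_num Y2)) -(fineK (expectation_fin_num (L1 _ X2))).
rewrite -(fineK (expectation_fin_num (L1 _ Y2))).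
rewrite -EFinB -EFin_expe -!EFinD -!EFinM !lee_fin.
have := sqr_ge0 (fine 'E_P[X] - fine 'E_P[Y])%R; lra.
Qed.

End second_moments.

Section squared_norm.
Context (R : realType) (d : nat).

Lemma sqnorm2_ge0 (u : 'rV[R]_d) : 0 <= sqnorm2 u.
Proof. by apply: sumr_ge0 => i _; exact: sqr_ge0. Qed.

Lemma sqr_coord_le_sqnorm2 (u : 'rV[R]_d) (i : 'I_d) : u ord0 i ^+ 2 <= sqnorm2 u.
Proof. by rewrite /sqnorm2 (bigD1 i) //= lerDl sumr_ge0 // => j _; exact: sqr_ge0. Qed.

End squared_norm.

Section square_integrable.
Context dX (X : measurableType dX) (R : realType) (d : nat).
Context (mu : {measure set X -> \bar R}).

Lemma sq_integrable_coord_Lfun2 (f : X -> 'rV[R]_d) (i : 'I_d) :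
  sq_integrable mu f -> (fun x => f x ord0 i) \in Lfun mu 2%:E.
Proof.
move=> [mf intf]; apply: sqr_integrable_Lfun2 => //.
apply: le_integrable intf => //.
- by apply/measurable_EFinP; exact: measurable_funX.
- move=> x _ /=; rewrite !ger0_norm ?sqr_ge0 ?sqnorm2_ge0 //.
  exact: sqr_coord_le_sqnorm2.
Qed.

Lemma measurable_coordB (h1 h2 : X -> 'rV[R]_d) :
  (forall i, measurable_fun setT (fun x => h1 x ord0 i)) ->
  (forall i, measurable_fun setT (fun x => h2 x ord0 i)) ->
  forall i, measurable_fun setT (fun x => (h1 x - h2 x) ord0 i).
Proof.
move=> mh1 mh2 i.
rewrite (_ : (fun x => _) = (fun x => h1 x ord0 i - h2 x ord0 i)).
  exact: measurable_funB.
by apply/funext => x; rewrite !mxE.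
Qed.

Lemma integral_sqnorm2 (h : X -> 'rV[R]_d) :
  (forall i, measurable_fun setT (fun x => h x ord0 i)) ->
  (\int[mu]_x (sqnorm2 (h x))%:E = \sum_(i < d) \int[mu]_x ((h x ord0 i) ^+ 2)%:E)%E.
Proof.
move=> mh; rewrite -ge0_integral_sum //.
- by apply: eq_integral => x _; rewrite /sqnorm2 sumEFin.
- by move=> i; apply/measurable_EFinP; exact: measurable_funX.
- by move=> i x _; rewrite lee_fin sqr_ge0.
Qed.

End square_integrable.

Theorem lemma4 (dX : measure_display) (X : measurableType dX) (R : realType)
  (d : nat) (P : probability X R) (f g : X -> 'rV[R]_d) :
  sq_integrable P f -> sq_integrable P g ->
  (\int[(P \x P)%E]_(z in setT) (sqnorm2 (f z.1 - g z.2))%:E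
   >= 2^-1%:E * \int[P]_(x in setT) (sqnorm2 (f x - g x))%:E)%E.
Proof.
move=> sqf sqg.
have mf i : measurable_fun setT (fun x => f x ord0 i) by case: sqf.
have mg i : measurable_fun setT (fun x => g x ord0 i) by case: sqg.
have mfg := measurable_coordB mf mg.
have mfg_iid := measurable_coordB (h1 := f \o fst) (h2 := g \o snd)
  (fun i => measurableT_comp (mf i) measurable_fst)
  (fun i => measurableT_comp (mg i) measurable_snd).
rewrite !integral_sqnorm2 // ge0_sume_distrr; last first.
  by move=> i _; apply: integral_ge0 => x _; rewrite lee_fin sqr_ge0.
apply: lee_sum => i _.
under eq_integral do rewrite !mxE.
under [X in (_ <= X)%E]eq_integral do rewrite !mxE.
by apply: iid_sqr_dist_ge; exact: sq_integrable_coord_Lfun2.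
Qed.
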